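(* Let $G$ be an abelian group and $B=\bigoplus_{i\in G}B_i$ a $G$-graded integral domain containing $\mathbb{Q}$. Suppose $d\in G$ has infinite order and $D:B^{(d)}\to B^{(d)}$ is a nonzero homogeneous locally nilpotent derivation with $\ker D\not\subseteq B_0$. Then some element of $D(B^{(d)})\cap\ker(D)$ is a cylindrical element of $B$.
   Context: $B^{(d)}=\bigoplus_{i\in\langle d\rangle}B_i$, where $\langle d\rangle$ is the subgroup generated by $d$. A derivation is homogeneous if it shifts degrees by a fixed element of the group; locally nilpotent if every element is killed by some power. For nonzero homogeneous $f$, $B_{(f)}$ is the degree-$0$ subring of $B_f=S^{-1}B$, $S=\{1,f,f^2,\dots\}$. A ring is a polynomial ring in one variable if it is a polynomial ring in one variable over some subring (zero ring counts). For a $G$-graded ring $B$, an element $f$ is cylindrical if it is nonzero and homogeneous, $\deg(f)\in G$ has infinite order, and $B_{(f)}$ is a polynomial ring in one variable. *)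

From HB Require Import structures.
From mathcomp Require Import all_boot all_order all_algebra.
From mathcomp Require Import fraction.
Set Implicit Arguments. Unset Strict Implicit. Unset Printing Implicit Defensive.
Import Order.TTheory GRing.Theory Num.Theory.
Local Open Scope ring_scope.

Section Graded.
Variables (G : zmodType) (B : idomainType).

Definition contains_Q : Prop := forall n : nat, (0 < n)%N -> (n%:R : B) \is a GRing.unit.

Definition is_grading (Bi : G -> pred B) : Prop :=
  [/\ (forall i, 0 \in Bi i) /\
      (forall i x y, x \in Bi i -> y \in Bi i -> x - y \in Bi i),
      1 \in Bi 0,
      (forall i j x y, x \in Bi i -> y \in Bi j -> x * y \in Bi (i + j)),
      (forall x : B, exists (s : seq G) (c : G -> B),
          uniq s /\ (forall i, c i \in Bi i) /\ x = \sum_(i <- s) c i)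
    &
      (forall (s : seq G) (c : G -> B), uniq s -> (forall i, c i \in Bi i) ->
          \sum_(i <- s) c i = 0 -> forall i, i \in s -> c i = 0)].

Definition in_cyclic (d i : G) : Prop := exists z : int, i = d *~ z.

Definition infinite_order (d : G) : Prop := forall n : nat, (0 < n)%N -> d *+ n != 0.

(* B^{(d)} = (+)_{i in <d>} B_i, as a predicate on B *)
Definition Veronese (Bi : G -> pred B) (d : G) (x : B) : Prop :=
  exists (s : seq G) (c : G -> B),
    (forall i, i \in s -> in_cyclic d i) /\ (forall i, c i \in Bi i) /\
    x = \sum_(i <- s) c i.

Definition homogeneous_elt (Bi : G -> pred B) (x : B) : Prop := exists i, x \in Bi i.

(* D : B^{(d)} -> B^{(d)} (modelled as a function B -> B, only its values on
   B^{(d)} matter) is a derivation of B^{(d)} *)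
Definition derivation_on (S : B -> Prop) (D : B -> B) : Prop :=
  [/\ (forall x, S x -> S (D x)),
      (forall x y, S x -> S y -> D (x + y) = D x + D y)
    & (forall x y, S x -> S y -> D (x * y) = x * D y + D x * y)].

Definition homogeneous_der (Bi : G -> pred B) (d : G) (D : B -> B) : Prop :=
  exists e : G, forall i x, in_cyclic d i -> x \in Bi i -> D x \in Bi (i + e).

Definition locally_nilpotent_on (S : B -> Prop) (D : B -> B) : Prop :=
  forall x, S x -> exists n : nat, iter n D x = 0.

Local Notation F := {fraction B}.
Local Notation toF := (@FracField.tofrac B).

(* B_(f) = degree-0 part of B_f, realised inside Frac(B) (B is a domain, so
   B_f embeds in Frac(B)): elements b / f^n with b in B_{n deg f}. *)
Definition deg0_loc (Bi : G -> pred B) (f : B) (i : G) (y : F) : Prop :=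
  exists (n : nat) (b : B), b \in Bi (i *+ n) /\ y = toF b / (toF f) ^+ n.

Definition poly_ring_one_var (R : F -> Prop) : Prop :=
  exists (A : F -> Prop) (t : F),
    [/\ (forall a, A a -> R a) /\ A 0 /\ A 1,
        (forall a b, A a -> A b -> A (a - b)),
        (forall a b, A a -> A b -> A (a * b)) /\ R t,
        (forall y, R y <-> exists p : {poly F},
            (forall k, A p`_k) /\ y = p.[t])
      & (forall p : {poly F}, (forall k, A p`_k) -> p.[t] = 0 -> p = 0)].

Definition cylindrical (Bi : G -> pred B) (f : B) : Prop :=
  f != 0 /\ exists i : G,
    [/\ f \in Bi i, infinite_order i & poly_ring_one_var (deg0_loc Bi f i)].

End Graded.

From HB Require Import structures.
From mathcomp Require Import all_boot all_order all_algebra.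
From mathcomp Require Import fraction.
From mathcomp Require Import ring.
From Stdlib Require Import Classical.
Set Implicit Arguments. Unset Strict Implicit. Unset Printing Implicit Defensive.
Import Order.TTheory GRing.Theory Num.Theory.
Local Open Scope ring_scope.

(* Through z |-> z d the Veronese ring B^(d) is Z-graded, and D has some degree
   e there.  Local nilpotency yields a homogeneous local slice r: f := D r <> 0
   and D f = 0.  As Q is in B, integrating D^q b = 0 one step at a time gives
   f^L b = P(r) for every homogeneous b, where P has homogeneous coefficients in
   ker D; moreover r is transcendental over ker D.  Hence B_(f) is spanned over
   A = (ker D)_(f) by the degree-0 fractions c r^k / f^L.  If the degrees of the
   homogeneous kernel elements generate gZ and m is the order of deg r modulo g,
   only the powers r^(m l) occur.  After multiplying r by kernel elements a, b
   with deg a - deg b = g, there are kernel elements V, V' with V V' = f^2 such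
   that t = r^m V^p / f^p has degree 0, and then B_(f) = A[t] with t
   transcendental over A.  A kernel element of nonzero degree (ker D is not in
   B_0) makes deg f nonzero, hence of infinite order. *)

Lemma ex_minn_pos (P : nat -> Prop) : (exists n, (0 < n)%N /\ P n) ->
  exists n, [/\ (0 < n)%N, P n & forall k, (0 < k < n)%N -> ~ P k].
Proof.
move=> [n [n_gt0 Pn]]; elim/ltn_ind: n n_gt0 Pn => n IH n_gt0 Pn.
have [[k [/andP[k_gt0 lt_kn] Pk]]|no_k] := classic (exists k, (0 < k < n)%N /\ P k).
  exact: IH Pk.
by exists n; split => // k lt_k Pk; apply: no_k; exists k.
Qed.

Lemma mulrz_inj_infinite_order (G : zmodType) (d : G) :
  infinite_order d -> injective (fun z : int => d *~ z).
Proof.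
move=> d_inf z1 z2 /= /eqP; rewrite -subr_eq0 -mulrzBr => /eqP dz0.
apply/eqP; rewrite -subr_eq0; move: dz0; case: (z1 - z2) => [[|n]|n] // dz0.
  by move: (d_inf n.+1 isT); rewrite pmulrn dz0 eqxx.
by move: (d_inf n.+1 isT); rewrite pmulrn -oppr_eq0 -mulrNz -NegzE dz0 eqxx.
Qed.

Lemma divf_split_square (K : fieldType) (c R X Y y Z : K) :
  y != 0 -> Z != 0 -> X * Y = Z * Z -> c * R / y = c * Y / (y * Z) * (R * X / Z).
Proof.
move=> y_neq0 Z_neq0 XY.
have -> : c * Y / (y * Z) * (R * X / Z) = c * R * (X * Y) / (y * Z * Z).
  by field; rewrite y_neq0 Z_neq0.
by rewrite XY; field; rewrite y_neq0 Z_neq0.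
Qed.

Lemma coef_sum_scaleXn (R : nzRingType) (a : nat -> R) (s m j : nat) :
  (0 < m)%N -> (j < s)%N -> (\sum_(k < s) a k *: 'X^(m * k))`_(m * j) = a j.
Proof.
move=> m_gt0 j_s; rewrite coef_sum (bigD1 (Ordinal j_s)) //= coefZ coefXn eqxx mulr1.
rewrite big1 ?addr0 // => k neq_kj; have kj : (k : nat) != j.
  by apply: contraNneq neq_kj => kj; apply/eqP/val_inj.
by rewrite coefZ coefXn eqn_pmul2l // eq_sym (negbTE kj) mulr0.
Qed.

Lemma dvdz_mul_divgcd (g : nat) (z : int) (k : nat) : (0 < g)%N ->
  (g%:Z %| z * k%:Z)%Z = (g %/ gcdn g `|z| %| k)%N.
Proof.
move=> g_gt0; have gcd_gt0 : (0 < gcdn g `|z|)%N by rewrite gcdn_gt0 g_gt0.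
rewrite dvdzE abszM !absz_nat -[RHS](dvdn_pmul2l gcd_gt0).
rewrite [(_ * (g %/ _))%N]mulnC divnK ?dvdn_gcdl //.
by rewrite muln_gcdl dvdn_gcd (dvdn_mulr _ (dvdnn g)).
Qed.

Section Grading.
Variables (G : zmodType) (B : idomainType) (Bi : G -> pred B).
Hypotheses (grB : is_grading Bi) (QB : contains_Q B).

Lemma grade0 i : 0 \in Bi i. Proof. by case: grB => [[]]. Qed.

Lemma gradeB i x y : x \in Bi i -> y \in Bi i -> x - y \in Bi i.
Proof. by case: grB => [[_ closedB]] *; apply: closedB. Qed.

Lemma gradeN i x : x \in Bi i -> - x \in Bi i.
Proof. by move=> x_i; rewrite -sub0r gradeB ?grade0. Qed.

Lemma gradeD i x y : x \in Bi i -> y \in Bi i -> x + y \in Bi i.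
Proof. by move=> x_i y_i; rewrite -[y]opprK gradeB ?gradeN. Qed.

Lemma gradeMn i x n : x \in Bi i -> x *+ n \in Bi i.
Proof. by move=> x_i; elim: n => [|n IH]; rewrite ?mulr0n ?grade0 // mulrS gradeD. Qed.

Lemma grade1 : 1 \in Bi 0. Proof. by case: grB. Qed.

Lemma gradeM i j x y : x \in Bi i -> y \in Bi j -> x * y \in Bi (i + j).
Proof. by case: grB => _ _ closedM _ _; apply: closedM. Qed.

Lemma grade_sum (I : Type) (s : seq I) (P : pred I) (F : I -> B) j :
  (forall k, P k -> F k \in Bi j) -> \sum_(k <- s | P k) F k \in Bi j.
Proof.
by move=> F_j; apply: (big_ind (fun x => x \in Bi j)) => //; [apply: grade0|apply: gradeD].
Qed.

Lemma natr_neq0 n : (0 < n)%N -> (n%:R : B) != 0.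
Proof. by move/QB; apply: contraTneq => ->; rewrite unitr0. Qed.

Lemma char0_mulrn_eq0 (x : B) n : (0 < n)%N -> (x *+ n == 0) = (x == 0).
Proof. by move=> n_gt0; rewrite -mulr_natr mulf_eq0 (negbTE (natr_neq0 n_gt0)) orbF. Qed.

(* Repetitions in [s] are harmless because B has characteristic 0. *)
Lemma graded_sum_eq0 (s : seq G) (F : G -> B) :
  (forall i, i \in s -> F i \in Bi i) -> \sum_(i <- s) F i = 0 ->
  forall i, i \in s -> F i = 0.
Proof.
move=> F_hom sum0 i i_s; case: grB => _ _ _ _ direct.
pose c j := if j \in s then F j *+ count_mem j s else 0.
have c_hom j : c j \in Bi j by rewrite /c; case: ifP => [/F_hom/gradeMn|_]; rewrite ?grade0.
have sum_c : \sum_(j <- undup s) c j = 0.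
  have count_sum : \sum_(j <- s) F j = \sum_(j <- undup s) F j *+ count_mem j s.
    rewrite -big_undup_iterop_count; apply: eq_bigr => j _.
    by case: (count_mem j s) => // n; elim: n.
  rewrite -[RHS]sum0 count_sum; apply: eq_big_seq => j.
  by rewrite mem_undup /c => ->.
move: (direct _ c (undup_uniq s) c_hom sum_c i); rewrite mem_undup i_s /c i_s.
have count_gt0 : (0 < count_mem i s)%N by rewrite -has_count has_pred1.
by move/(_ isT)/eqP; rewrite char0_mulrn_eq0 // => /eqP.
Qed.

Lemma homogeneous_component_eq0 (s : seq G) (c : G -> B) x j :
  (forall i, i \in s -> c i \in Bi i) -> x = \sum_(i <- s) c i -> x \in Bi j ->
  forall i, i \in s -> i != j -> c i = 0.
Proof.
move=> c_hom -> x_j.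
pose F k := if k == j then \sum_(i <- s | i == j) c i - \sum_(i <- s) c i else c k.
have F_hom k : k \in j :: [seq i <- s | i != j] -> F k \in Bi k.
  rewrite inE mem_filter /F; case: eqP => [-> _|_ /= /c_hom //].
  apply: gradeB x_j; rewrite big_seq_cond; apply: grade_sum => i /andP[/c_hom].
  by move=> + /eqP <-.
have sumF : \sum_(k <- j :: [seq i <- s | i != j]) F k = 0.
  rewrite big_cons /F eqxx big_filter [X in _ + X](eq_bigr c); last by move=> k /negbTE ->.
  by rewrite [X in _ - X](bigID (fun i => i == j)) opprD addrA subrr add0r addNr.
move=> i i_s neq_ij; have := graded_sum_eq0 F_hom sumF (i := i).
by rewrite /F (negbTE neq_ij) inE mem_filter neq_ij i_s orbT; apply.
Qed.

Lemma natr_inv_grade0 n : (0 < n)%N -> (n%:R : B)^-1 \in Bi 0.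
Proof.
move=> n_gt0; case: grB => _ _ _ decomp _.
have [s [c [_ [c_hom inv_eq]]]] := decomp (n%:R)^-1.
have nc_hom i : i \in s -> n%:R * c i \in Bi i.
  by move=> _; have := gradeM (gradeMn n grade1) (c_hom i); rewrite add0r.
have one_eq : 1 = \sum_(i <- s) n%:R * c i by rewrite -mulr_sumr -inv_eq mulrV ?QB.
have nc0 := homogeneous_component_eq0 nc_hom one_eq grade1.
rewrite inv_eq big_seq; apply: grade_sum => i i_s.
have [-> //|neq_i0] := eqVneq i 0.
move/eqP: (nc0 i i_s neq_i0); rewrite mulf_eq0 (negbTE (natr_neq0 n_gt0)) => /eqP ->.
exact: grade0.
Qed.
End Grading.

Definition graded_subring (B : idomainType) (S : int -> B -> Prop) :=
  [/\ forall z, S z 0, S 0 1, (forall z x y, S z x -> S z y -> S z (x - y))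
    & forall z1 z2 x y, S z1 x -> S z2 y -> S (z1 + z2) (x * y)].

Section DegreeZeroFractions.
Variables (B : idomainType) (S : int -> B -> Prop) (f : B) (dz : int).
Hypotheses (S_sub : graded_subring S) (Sf : S dz f) (f_neq0 : f != 0).
Local Notation toF := (@FracField.tofrac B).

Let S0 z : S z 0. Proof. by case: S_sub. Qed.
Let S1 : S 0 1. Proof. by case: S_sub. Qed.
Let SB z x y : S z x -> S z y -> S z (x - y). Proof. by case: S_sub => _ _ + _; apply. Qed.
Let SM z1 z2 x y : S z1 x -> S z2 y -> S (z1 + z2) (x * y).
Proof. by case: S_sub => _ _ _; apply. Qed.

(* With S the Z-grading of B and dz = deg f, this is B_(f). *)
Definition deg0_frac (y : {fraction B}) :=
  exists n b, S (dz * n%:Z) b /\ y = toF b / toF f ^+ n.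

Let S_cast z1 z2 x : z1 = z2 -> S z1 x -> S z2 x.
Proof. by move->. Qed.

Let SN z x : S z x -> S z (- x).
Proof. by move=> Sx; rewrite -sub0r; apply: SB. Qed.

Let SD z x y : S z x -> S z y -> S z (x + y).
Proof. by move=> Sx Sy; rewrite -[y]opprK; apply: SB => //; apply: SN. Qed.

Let S_expr n : S (dz * n%:Z) (f ^+ n).
Proof.
elim: n => [|n IH]; first by rewrite mulr0.
by rewrite exprS; apply: S_cast (SM Sf IH); rewrite -addn1 PoszD; ring.
Qed.

Let S_mulfX n m x : S (dz * n%:Z) x -> S (dz * (n + m)%:Z) (x * f ^+ m).
Proof. by move=> Sx; apply: S_cast (SM Sx (S_expr m)); rewrite PoszD; ring. Qed.

Let toF_f_neq0 : toF f != 0. Proof. by rewrite tofrac_eq0. Qed.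

Lemma deg0_frac0 : deg0_frac 0.
Proof. by exists 0%N, 0; rewrite rmorph0 mul0r; split. Qed.

Lemma deg0_frac1 : deg0_frac 1.
Proof. by exists 0%N, 1; rewrite mulr0 rmorph1 expr0 divr1; split. Qed.

Lemma deg0_fracN y : deg0_frac y -> deg0_frac (- y).
Proof.
by move=> [n [b [Sb ->]]]; exists n, (- b); rewrite rmorphN mulNr; split=> //; apply: SN.
Qed.

Lemma deg0_fracD y1 y2 : deg0_frac y1 -> deg0_frac y2 -> deg0_frac (y1 + y2).
Proof.
move=> [n1 [b1 [Sb1 ->]]] [n2 [b2 [Sb2 ->]]].
exists (n1 + n2)%N, (b1 * f ^+ n2 + b2 * f ^+ n1); split.
  by apply: SD; [|rewrite addnC]; apply: S_mulfX.
have fX_neq0 n : toF f ^+ n != 0 by rewrite expf_neq0 // toF_f_neq0.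
by rewrite rmorphD !rmorphM !rmorphXn exprD addf_div.
Qed.

Lemma deg0_fracB y1 y2 : deg0_frac y1 -> deg0_frac y2 -> deg0_frac (y1 - y2).
Proof. by move=> y1_0 y2_0; apply: deg0_fracD => //; apply: deg0_fracN. Qed.

Lemma deg0_fracM y1 y2 : deg0_frac y1 -> deg0_frac y2 -> deg0_frac (y1 * y2).
Proof.
move=> [n1 [b1 [Sb1 ->]]] [n2 [b2 [Sb2 ->]]].
exists (n1 + n2)%N, (b1 * b2); split; first by apply: S_cast (SM Sb1 Sb2); rewrite PoszD; ring.
by rewrite rmorphM exprD mulf_div.
Qed.

Lemma deg0_fracX y n : deg0_frac y -> deg0_frac (y ^+ n).
Proof.
move=> y_0; elim: n => [|n IH]; first by rewrite expr0; apply: deg0_frac1.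
by rewrite exprS; apply: deg0_fracM.
Qed.

Lemma deg0_frac_sum (I : Type) (s : seq I) (P : pred I) (F : I -> {fraction B}) :
  (forall i, P i -> deg0_frac (F i)) -> deg0_frac (\sum_(i <- s | P i) F i).
Proof. by move=> F_0; apply: (big_ind deg0_frac) => //; [apply: deg0_frac0|apply: deg0_fracD]. Qed.

Lemma deg0_frac_common_den (p : {poly {fraction B}}) :
  (forall k, deg0_frac p`_k) ->
  exists L (c : nat -> B), (forall k, S (dz * L%:Z) (c k)) /\
    forall k, p`_k * toF f ^+ L = toF (c k).
Proof.
elim/poly_ind: p => [|p a IH] p_0.
  by exists 0%N, (fun _ => 0); split=> [k|k]; rewrite ?coef0 ?rmorph0 ?mul0r.
have [|L [c [Sc c_eq]]] := IH.
  by move=> k; have := p_0 k.+1; rewrite coefD coefMX coefC /= addr0.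
have [n [b [Sb a_eq]]] : deg0_frac a by have := p_0 0%N; rewrite coefD coefMX coefC /= add0r.
exists (L + n)%N, (fun k => if k is k'.+1 then c k' * f ^+ n else b * f ^+ L); split.
  by case=> [|k]; [rewrite addnC|]; apply: S_mulfX.
case=> [|k]; rewrite coefD coefMX coefC /= ?add0r ?addr0 rmorphM rmorphXn.
  by rewrite a_eq exprD [toF f ^+ L * _]mulrC mulrA divfK // expf_neq0 // toF_f_neq0.
by rewrite exprD mulrA c_eq.
Qed.

End DegreeZeroFractions.


Section Veronese.
Variables (G : zmodType) (B : idomainType) (Bi : G -> pred B) (d : G).
Hypotheses (grB : is_grading Bi) (QB : contains_Q B).

Lemma Veronese_grade_cyclic x j :
  Veronese Bi d x -> x \in Bi j -> x != 0 -> in_cyclic d j.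
Proof.
move=> [s [c [s_cyc [c_hom x_eq]]]] x_j /eqP x_neq0; apply: NNPP => not_cyc.
have c0 := homogeneous_component_eq0 grB QB (fun i _ => c_hom i) x_eq x_j.
apply: x_neq0; rewrite x_eq big_seq big1 // => i i_s; apply: c0 => //.
by apply/eqP => eq_ij; apply: not_cyc; rewrite -eq_ij; apply: s_cyc.
Qed.

Definition Bd (z : int) : pred B := Bi (d *~ z).

Lemma Bd_Veronese z x : x \in Bd z -> Veronese Bi d x.
Proof.
move=> x_z; exists [:: d *~ z], (fun j => if j == d *~ z then x else 0); split.
- by move=> i; rewrite inE => /eqP ->; exists z.
- by split=> [i|]; [case: eqP => [->|_] //; apply: (grade0 grB)|rewrite big_seq1 eqxx].
Qed.

Lemma Bd_cast z1 z2 x : z1 = z2 -> x \in Bd z1 -> x \in Bd z2.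
Proof. by move->. Qed.

Lemma Bd0 z : 0 \in Bd z. Proof. exact: (grade0 grB (d *~ z)). Qed.

Lemma Bd1 : 1 \in Bd 0. Proof. exact: grade1 grB. Qed.

Lemma BdM z1 z2 x y : x \in Bd z1 -> y \in Bd z2 -> x * y \in Bd (z1 + z2).
Proof. by rewrite /Bd mulrzDr; apply: (gradeM grB). Qed.

Lemma Bd_subring : graded_subring (fun z x => x \in Bd z).
Proof. by split=> [||z x y|]; [apply: Bd0|apply: Bd1|apply: (gradeB grB)|apply: BdM]. Qed.

Lemma BdX z x n : x \in Bd z -> x ^+ n \in Bd (z * n%:Z).
Proof.
move=> x_z; elim: n => [|n IH]; first by rewrite mulr0; apply: Bd1.
by rewrite exprS -addn1 PoszD mulrDr mulr1 addrC; apply: BdM.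
Qed.

Variable D : B -> B.
Hypothesis derD : derivation_on (Veronese Bi d) D.

Lemma der_add z1 z2 x y : x \in Bd z1 -> y \in Bd z2 -> D (x + y) = D x + D y.
Proof. by case: derD => _ Dadd _ /Bd_Veronese x_V /Bd_Veronese y_V; apply: Dadd. Qed.

Lemma der_mul z1 z2 x y :
  x \in Bd z1 -> y \in Bd z2 -> D (x * y) = x * D y + D x * y.
Proof. by case: derD => _ _ Dmul /Bd_Veronese x_V /Bd_Veronese y_V; apply: Dmul. Qed.

Lemma der0 : D 0 = 0.
Proof. by apply: (addrI (D 0)); rewrite -(der_add (Bd0 0) (Bd0 0)) !addr0. Qed.

Lemma der1 : D 1 = 0.
Proof.
have := der_mul Bd1 Bd1; rewrite !mulr1 mul1r => D1_eq.
by apply: (addrI (D 1)); rewrite addr0 -D1_eq.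
Qed.

Lemma derN z x : x \in Bd z -> D (- x) = - D x.
Proof.
move=> x_z; apply: (addrI (D x)).
by rewrite -(der_add x_z (gradeN grB x_z)) !subrr der0.
Qed.

Lemma derB z1 z2 x y : x \in Bd z1 -> y \in Bd z2 -> D (x - y) = D x - D y.
Proof. by move=> x_z y_z; rewrite (der_add x_z (gradeN grB y_z)) (derN y_z). Qed.

Lemma derMn z x n : x \in Bd z -> D (x *+ n) = D x *+ n.
Proof.
move=> x_z; elim: n => [|n IH]; first by rewrite !mulr0n der0.
by rewrite !mulrS (der_add x_z (gradeMn grB n x_z)) IH.
Qed.

Lemma der_sum_Veronese (s : seq G) (c : G -> B) :
  (forall i, i \in s -> in_cyclic d i) -> (forall i, c i \in Bi i) ->
  D (\sum_(i <- s) c i) = \sum_(i <- s) D (c i).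
Proof.
elim: s => [|a s IH] s_cyc c_hom; first by rewrite !big_nil der0.
have s'_cyc i : i \in s -> in_cyclic d i by move=> i_s; apply: s_cyc; rewrite inE i_s orbT.
have [z a_eq] := s_cyc a (mem_head a s).
have ca_z : c a \in Bd z by rewrite /Bd -a_eq.
case: derD => _ Dadd _; rewrite !big_cons Dadd ?IH //; first exact: Bd_Veronese ca_z.
by exists s, c.
Qed.

Definition ker_hom z x := x \in Bd z /\ D x = 0.

Lemma ker_hom_cast z1 z2 x : z1 = z2 -> ker_hom z1 x -> ker_hom z2 x.
Proof. by move->. Qed.

Lemma ker_hom0 z : ker_hom z 0. Proof. by split; [apply: Bd0|apply: der0]. Qed.

Lemma ker_hom1 : ker_hom 0 1. Proof. by split; [apply: Bd1|apply: der1]. Qed.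

Lemma ker_homD z x y : ker_hom z x -> ker_hom z y -> ker_hom z (x + y).
Proof.
by move=> [x_z Dx] [y_z Dy]; split; [apply: (gradeD grB)|rewrite (der_add x_z y_z) Dx Dy addr0].
Qed.

Lemma ker_homB z x y : ker_hom z x -> ker_hom z y -> ker_hom z (x - y).
Proof.
by move=> [x_z Dx] [y_z Dy]; split; [apply: (gradeB grB)|rewrite (derB x_z y_z) Dx Dy subr0].
Qed.

Lemma ker_homMn z x n : ker_hom z x -> ker_hom z (x *+ n).
Proof. by move=> [x_z Dx]; split; [apply: (gradeMn grB)|rewrite (derMn n x_z) Dx mul0rn]. Qed.

Lemma ker_homM z1 z2 x y :
  ker_hom z1 x -> ker_hom z2 y -> ker_hom (z1 + z2) (x * y).
Proof.
move=> [x_z Dx] [y_z Dy]; split; first exact: BdM.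
by rewrite (der_mul x_z y_z) Dx Dy mulr0 mul0r addr0.
Qed.

Lemma ker_hom_subring : graded_subring ker_hom.
Proof. by split; [apply: ker_hom0|apply: ker_hom1|apply: ker_homB|apply: ker_homM]. Qed.

Lemma ker_homX z x n : ker_hom z x -> ker_hom (z * n%:Z) (x ^+ n).
Proof.
move=> x_ker; elim: n => [|n IH]; first by rewrite expr0 mulr0; apply: ker_hom1.
by rewrite exprS -addn1 PoszD mulrDr mulr1 addrC; apply: ker_homM.
Qed.

Lemma ker_hom_sum z (I : Type) (s : seq I) (P : pred I) (F : I -> B) :
  (forall k, P k -> ker_hom z (F k)) -> ker_hom z (\sum_(k <- s | P k) F k).
Proof. by move=> F_ker; apply: (big_ind (ker_hom z)) => //; [apply: ker_hom0|apply: ker_homD]. Qed.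

Lemma ker_hom_natr_inv n : (0 < n)%N -> ker_hom 0 (n%:R)^-1.
Proof.
move=> n_gt0; have u_0 : (n%:R : B)^-1 \in Bd 0 := natr_inv_grade0 grB QB n_gt0.
have n_0 : (n%:R : B) \in Bd 0 by apply: (gradeMn grB); apply: Bd1.
split=> //; have := der_mul n_0 u_0.
rewrite mulrV ?QB // der1 (derMn _ Bd1) der1 mul0rn mul0r addr0 => /esym/eqP.
by rewrite mulf_eq0 (negbTE (natr_neq0 QB n_gt0)) => /eqP.
Qed.

Lemma der_mul_kerl zc c z x : ker_hom zc c -> x \in Bd z -> D (c * x) = c * D x.
Proof. by move=> [c_z Dc] x_z; rewrite (der_mul c_z x_z) Dc mul0r addr0. Qed.

Lemma Veronese_hom_der_neq0 x : Veronese Bi d x -> D x != 0 ->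
  exists z x0, x0 \in Bd z /\ D x0 != 0.
Proof.
move=> [s [c [s_cyc [c_hom ->]]]]; rewrite der_sum_Veronese // => Dsum_neq0.
apply: NNPP => no_x0; move/eqP: Dsum_neq0; apply.
rewrite big_seq big1 // => i i_s; apply: NNPP => /eqP Dc_neq0.
have [z i_eq] := s_cyc i i_s; apply: no_x0; exists z, (c i).
by rewrite /Bd -i_eq.
Qed.

Lemma homogeneous_der_int_shift z0 x0 : homogeneous_der Bi d D ->
  x0 \in Bd z0 -> D x0 != 0 ->
  exists ez, forall z x, x \in Bd z -> D x \in Bd (z + ez).
Proof.
move=> [e De] x0_z0 Dx0_neq0.
have Dx0_e : D x0 \in Bi (d *~ z0 + e) by apply: De => //; exists z0.
have Dx0_V : Veronese Bi d (D x0) by case: derD => DV _ _; apply: DV; apply: Bd_Veronese x0_z0.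
have [w e_eq] := Veronese_grade_cyclic Dx0_V Dx0_e Dx0_neq0.
exists (w - z0) => z x x_z; rewrite /Bd mulrzDr mulrzBr -e_eq addrAC subrr add0r.
by apply: De => //; exists z.
Qed.

Lemma Veronese_ker_nonzero_degree y : homogeneous_der Bi d D ->
  Veronese Bi d y -> D y = 0 -> y \notin Bi 0 ->
  exists z h, [/\ z != 0, h != 0 & ker_hom z h].
Proof.
move=> [e De] [s [c [s_cyc [c_hom y_eq]]]] Dy0 y_not0.
have Dc0 i : i \in s -> D (c i) = 0.
  have Dc_hom j : j \in [seq i + e | i <- s] -> D (c (j - e)) \in Bi j.
    by move=> /mapP[k k_s ->]; rewrite addrK; apply: De; [apply: s_cyc|].
  have Dc_sum : \sum_(j <- [seq i + e | i <- s]) D (c (j - e)) = 0.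
    by rewrite big_map; under eq_bigr do rewrite addrK; rewrite -der_sum_Veronese // -y_eq.
  move=> i_s; have := graded_sum_eq0 grB QB Dc_hom Dc_sum (i := i + e).
  by rewrite addrK; apply; apply: map_f.
have [i [i_s i_neq0 ci_neq0]] : exists i, [/\ i \in s, i != 0 & c i != 0].
  apply: NNPP => no_i; move: y_not0; rewrite y_eq big_seq; apply/negP/negPn.
  apply: (grade_sum grB) => i i_s; have [-> //|i_neq0] := eqVneq i 0.
  have [-> |ci_neq0] := eqVneq (c i) 0; first exact: grade0.
  by case: no_i; exists i.
have [z i_eq] := s_cyc i i_s; exists z, (c i); split=> //.
- by apply: contraNneq i_neq0 => z0; rewrite i_eq z0 mulr0z.
- by split; [rewrite /Bd -i_eq|apply: Dc0].
Qed.

(* With f = a b e: V = f b / a and V' = f a / b, swapped when w < 0. *)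
Lemma ker_hom_square_split za zb ze a b e (w : int) :
  ker_hom za a -> ker_hom zb b -> ker_hom ze e ->
  exists (p : nat) V V' zV zV', [/\ ker_hom zV V, ker_hom zV' V',
    V * V' = (a * b * e) ^+ 2, w * (za - zb) + zV * p%:Z = (za + zb + ze) * p%:Z
    & zV + zV' = (za + zb + ze) + (za + zb + ze)].
Proof.
move=> a_ker b_ker e_ker; have [w_ge0|w_lt0] := leP 0 w.
  exists `|w|%N, (b * (b * e)), (a * (a * e)), (zb + (zb + ze)), (za + (za + ze)).
  split; rewrite ?gez0_abs //; try ring; by do !apply: ker_homM.
exists `|w|%N, (a * (a * e)), (b * (b * e)), (za + (za + ze)), (zb + (zb + ze)).
split; rewrite ?ltz0_abs //; try ring; by do !apply: ker_homM.
Qed.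

(* The subgroup of Z generated by the degrees of the nonzero homogeneous elements
   of ker D. *)
Definition in_ker_degree_group (n : int) := exists a b za zb,
  [/\ a != 0, b != 0, ker_hom za a, ker_hom zb b & n = za - zb].

Lemma ker_degree_group_hom z c : c != 0 -> ker_hom z c -> in_ker_degree_group z.
Proof.
by move=> c_neq0 c_ker; exists c, 1, z, 0; rewrite oner_neq0 subr0; split=> //; apply: ker_hom1.
Qed.

Lemma ker_degree_groupB n1 n2 :
  in_ker_degree_group n1 -> in_ker_degree_group n2 -> in_ker_degree_group (n1 - n2).
Proof.
move=> [a1 [b1 [za1 [zb1 [a1_neq0 b1_neq0 a1_ker b1_ker ->]]]]].
move=> [a2 [b2 [za2 [zb2 [a2_neq0 b2_neq0 a2_ker b2_ker ->]]]]].
exists (a1 * b2), (b1 * a2), (za1 + zb2), (zb1 + za2).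
by split; rewrite ?mulf_neq0 //; [apply: ker_homM..|ring].
Qed.

Lemma ker_degree_group0 : in_ker_degree_group 0.
Proof.
rewrite -(subrr 0); apply: ker_degree_groupB.
all: exact: (ker_degree_group_hom (oner_neq0 _) ker_hom1).
Qed.

Lemma ker_degree_groupMz n q : in_ker_degree_group n -> in_ker_degree_group (n * q).
Proof.
move=> n_in; have n_nat k : in_ker_degree_group (n * k%:Z).
  elim: k => [|k IH]; first by rewrite mulr0; apply: ker_degree_group0.
  have -> : n * k.+1%:Z = n * k%:Z - (0 - n) by rewrite -addn1 PoszD; ring.
  by apply: ker_degree_groupB => //; apply: ker_degree_groupB => //; apply: ker_degree_group0.
case: q => k; first exact: n_nat.
by rewrite NegzE mulrN -sub0r; apply: ker_degree_groupB; [apply: ker_degree_group0|apply: n_nat].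
Qed.

Lemma ker_degree_group_generator n0 : n0 != 0 -> in_ker_degree_group n0 ->
  exists g : nat, [/\ (0 < g)%N, in_ker_degree_group g &
    forall n, in_ker_degree_group n -> (g %| n)%Z].
Proof.
move=> n0_neq0 n0_in.
have [|g [g_gt0 g_in g_min]] := @ex_minn_pos (fun k : nat => in_ker_degree_group k).
  by exists `|n0|%N; rewrite absz_gt0 abszEsg mulrC; split=> //; apply: ker_degree_groupMz.
exists g; split=> // n n_in; apply/dvdz_mod0P.
have g_neq0 : g%:Z != 0 by rewrite eqz_nat -lt0n.
have mod_in : in_ker_degree_group (n %% g)%Z.
  have -> : (n %% g)%Z = n - (n %/ g)%Z * g.
    by apply/eqP; rewrite eq_sym subr_eq addrC -divz_eq.
  by apply: ker_degree_groupB => //; rewrite mulrC; apply: ker_degree_groupMz.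
apply: NNPP => mod_neq0; apply: (g_min `|(n %% g)%Z|%N); last by rewrite gez0_abs ?modz_ge0.
by rewrite absz_gt0; apply/andP; split; [apply/eqP|rewrite -ltz_nat gez0_abs ?modz_ge0 ?ltz_pmod].
Qed.

Hypothesis nilD : locally_nilpotent_on (Veronese Bi d) D.

Section IntShift.
Variable ez : int.
Hypotheses (shiftD : forall z x, x \in Bd z -> D x \in Bd (z + ez))
  (d_inf : infinite_order d).

Lemma exists_local_slice z0 x0 : x0 \in Bd z0 -> D x0 != 0 ->
  exists rz r, [/\ r \in Bd rz, D r != 0 & D (D r) = 0].
Proof.
move=> x0_z0; have [q] := nilD (Bd_Veronese x0_z0).
elim: q x0 z0 x0_z0 => [|q IH] x z x_z; first by move=> /= ->; rewrite der0 eqxx.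
rewrite iterSr => Dq0 Dx_neq0; have [DDx0|DDx_neq0] := eqVneq (D (D x)) 0.
  by exists z, x.
exact: IH (shiftD x_z) Dq0 DDx_neq0.
Qed.

Lemma slice_mulr_ker z r zc c : r \in Bd z -> D r != 0 -> D (D r) = 0 ->
  c != 0 -> ker_hom zc c ->
  [/\ r * c \in Bd (z + zc), D (r * c) = D r * c, D (r * c) != 0 & D (D (r * c)) = 0].
Proof.
move=> r_z Dr_neq0 DDr0 c_neq0 [c_zc Dc0].
have Drc : D (r * c) = D r * c by rewrite (der_mul r_z c_zc) Dc0 mulr0 add0r.
split=> //; first exact: BdM.
- by rewrite Drc mulf_neq0.
- by rewrite Drc (der_mul (shiftD r_z) c_zc) Dc0 DDr0 mulr0 mul0r addr0.
Qed.

Section Slice.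
Variables (rz : int) (r : B).
Hypotheses (r_rz : r \in Bd rz) (Dr_neq0 : D r != 0) (DDr0 : D (D r) = 0).
Local Notation f := (D r).
Local Notation dz := (rz + ez).

Lemma ker_hom_slice : ker_hom dz f.
Proof. by split=> //; apply: shiftD. Qed.

Definition slice_poly g (P : {poly B}) := forall k : nat, ker_hom (g - rz * k%:Z) P`_k.

Lemma slice_poly_cast g1 g2 P : g1 = g2 -> slice_poly g1 P -> slice_poly g2 P.
Proof. by move->. Qed.

Lemma horner_slice_poly g P : slice_poly g P -> P.[r] \in Bd g.
Proof.
move=> P_g; rewrite horner_coef; apply: (grade_sum grB) => k _.
apply: (@Bd_cast (g - rz * k%:Z + rz * k%:Z)); first by rewrite subrK.
by apply: BdM; [case: (P_g k)|apply: BdX].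
Qed.

Lemma der_horner_slice_poly P g : slice_poly g P -> D P.[r] = f * P^`().[r].
Proof.
elim/poly_ind: P g => [|Q c IH] g QXc_g; first by rewrite deriv0 !horner0 der0 mulr0.
have Q_g : slice_poly (g - rz) Q.
  move=> k; have := QXc_g k.+1; rewrite coefD coefMX coefC /= addr0.
  by apply: ker_hom_cast; rewrite -addn1 PoszD; ring.
have [c_g Dc0] : ker_hom g c.
  by have := QXc_g 0%N; rewrite coefD coefMX coefC /= add0r mulr0 subr0.
have Qr_g := horner_slice_poly Q_g.
have Qrr_g : Q.[r] * r \in Bd g by apply: (Bd_cast (subrK rz g)); apply: BdM.
rewrite hornerMXaddC (der_add Qrr_g c_g) (der_mul Qr_g r_rz) (IH _ Q_g) Dc0.
by rewrite derivMXaddC hornerD hornerMX; ring.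
Qed.

Lemma slice_poly_deriv g P : slice_poly g P -> slice_poly (g - rz) P^`().
Proof.
move=> P_g k; rewrite coef_deriv; apply: ker_homMn; have := P_g k.+1.
by apply: ker_hom_cast; rewrite -addn1 PoszD; ring.
Qed.

Lemma slice_poly_root_eq0 P g : slice_poly g P -> P.[r] = 0 -> P = 0.
Proof.
elim: {P}(size P) {-2}P (leqnn (size P)) g => [|n IH] P size_P g P_g Pr0.
  by apply/eqP; rewrite -size_poly_eq0 -leqn0.
have P'0 : P^`() = 0.
  have := der_horner_slice_poly P_g; rewrite Pr0 der0 => /esym/eqP.
  rewrite mulf_eq0 (negbTE Dr_neq0) => /eqP P'r0.
  apply: (IH _ _ _ (slice_poly_deriv P_g) P'r0).
  have [->|P_neq0] := eqVneq P 0; first by rewrite deriv0 size_poly0.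
  by rewrite -ltnS (leq_trans (lt_size_deriv P_neq0)).
have P_const : P = (P`_0)%:P.
  apply/polyP => -[|k]; rewrite coefC //=; apply/eqP.
  by rewrite -(char0_mulrn_eq0 QB _ (ltn0Sn k)) -coef_deriv P'0 coef0.
by move: Pr0; rewrite P_const hornerC => ->.
Qed.

Lemma slice_poly_antiderivative g P :
  slice_poly g P -> exists Q, slice_poly (g + rz) Q /\ Q^`() = P.
Proof.
move=> P_g; pose Q := \poly_(k < (size P).+1) (if k is k'.+1 then P`_k' * (k%:R)^-1 else 0).
exists Q; split.
  case=> [|k]; rewrite coef_poly /=; first exact: (ker_hom0 _).
  case: ltnP => _; last exact: (ker_hom0 _).
  apply: ker_hom_cast (ker_homM (P_g k) (ker_hom_natr_inv (ltn0Sn k))).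
  by rewrite -addn1 PoszD; ring.
apply/polyP => k; rewrite coef_deriv coef_poly ltnS.
case: ltnP => [_|P_le]; last by rewrite mul0rn nth_default.
by rewrite -mulrnAr -[_ *+ k.+1]mulr_natr mulVr ?mulr1 // QB.
Qed.

Lemma slice_expansion bz b : b \in Bd bz ->
  exists L P, slice_poly (bz + dz * L%:Z) P /\ f ^+ L * b = P.[r].
Proof.
move=> b_bz; have [q] := nilD (Bd_Veronese b_bz).
elim: q bz b b_bz => [|q IH] bz b b_bz.
  move=> /= ->; exists 0%N, 0; rewrite !mulr0 horner0; split=> // k.
  by rewrite coef0; apply: ker_hom0.
rewrite iterSr => /(IH _ _ (shiftD b_bz)) [L [P [P_deg fLDb]]].
have [Q [Q_deg Q'_eq]] := slice_poly_antiderivative P_deg.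
have {}Q_deg : slice_poly (bz + dz * L.+1%:Z) Q.
  by apply: slice_poly_cast Q_deg; rewrite -addn1 PoszD; ring.
have Qr_deg := horner_slice_poly Q_deg.
have fb_deg : f ^+ L.+1 * b \in Bd (bz + dz * L.+1%:Z).
  by rewrite addrC; apply: BdM b_bz; case: (ker_homX L.+1 ker_hom_slice).
pose X := f ^+ L.+1 * b - Q.[r].
have X_ker : ker_hom (bz + dz * L.+1%:Z) X.
  split; first exact: (gradeB grB).
  rewrite /X (derB fb_deg Qr_deg) (der_mul_kerl (ker_homX L.+1 ker_hom_slice) b_bz).
  by rewrite (der_horner_slice_poly Q_deg) Q'_eq -fLDb exprS mulrA subrr.
exists L.+1, (Q + X%:P); split; last by rewrite hornerD hornerC addrC subrK.
case=> [|k]; rewrite coefD coefC /= ?addr0; last exact: Q_deg.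
by rewrite mulr0 subr0; apply: ker_homD X_ker; have := Q_deg 0%N; rewrite mulr0 subr0.
Qed.

Section Cylinder.
Variables (m p : nat) (V V' : B) (zV zV' : int).
Hypotheses (m_gt0 : (0 < m)%N)
  (m_dvd : forall k L c, c != 0 -> ker_hom (dz * L%:Z - rz * k%:Z) c -> (m %| k)%N)
  (V_ker : ker_hom zV V) (V'_ker : ker_hom zV' V') (VV' : V * V' = f ^+ 2)
  (t_deg0 : rz * m%:Z + zV * p%:Z = dz * p%:Z) (zVV' : zV + zV' = dz + dz).

Local Notation F := {fraction B}.
Local Notation toF := (@FracField.tofrac B).
Local Notation Bf := (deg0_frac (fun z x => x \in Bd z) f dz).
Local Notation Af := (deg0_frac ker_hom f dz).

Let f_Bd : f \in Bd dz. Proof. by case: ker_hom_slice. Qed.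
Let toF_fX_neq0 n : toF f ^+ n != 0. Proof. by rewrite expf_neq0 // tofrac_eq0. Qed.

Lemma deg0_locE y : deg0_loc Bi f (d *~ dz) y <-> Bf y.
Proof.
by split=> -[n [b [b_n ->]]]; exists n, b; rewrite /Bd mulrzA -pmulrn in b_n *.
Qed.

Lemma Af_Bf y : Af y -> Bf y.
Proof. by move=> [n [c [[c_n _] ->]]]; exists n, c. Qed.

Definition tvar : F := toF (r ^+ m * V ^+ p) / toF f ^+ p.

Lemma Bf_tvar : Bf tvar.
Proof.
exists p, (r ^+ m * V ^+ p); split=> //.
by apply: (Bd_cast t_deg0); apply: BdM; apply: BdX => //; case: V_ker.
Qed.

Definition in_Af_tvar y := exists P : {poly F}, (forall k, Af P`_k) /\ y = P.[tvar].

Lemma in_Af_tvarD y1 y2 : in_Af_tvar y1 -> in_Af_tvar y2 -> in_Af_tvar (y1 + y2).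
Proof.
move=> [P1 [P1_A ->]] [P2 [P2_A ->]]; exists (P1 + P2); rewrite hornerD; split=> // k.
by rewrite coefD; exact (deg0_fracD ker_hom_subring ker_hom_slice Dr_neq0 (P1_A k) (P2_A k)).
Qed.

Lemma in_Af_tvar_sum (I : Type) (s : seq I) (P : pred I) (F : I -> {fraction B}) :
  (forall i, P i -> in_Af_tvar (F i)) -> in_Af_tvar (\sum_(i <- s | P i) F i).
Proof.
move=> F_A; apply: (big_ind in_Af_tvar) => //; last exact: in_Af_tvarD.
exists 0; rewrite horner0; split=> // k; rewrite coef0; exact (deg0_frac0 _ _ ker_hom_subring).
Qed.

Lemma in_Af_tvar_monomial a l : Af a -> in_Af_tvar (a * tvar ^+ l).
Proof.
move=> a_A; exists (a%:P * 'X^l); rewrite hornerCM hornerXn; split=> // k.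
rewrite coefCM coefXn; case: (k == l); rewrite ?mulr1 ?mulr0 //.
exact (deg0_frac0 _ _ ker_hom_subring).
Qed.

Let zV'_p : zV' * p%:Z = dz * p%:Z + rz * m%:Z.
Proof.
have -> : zV' = dz + dz - zV by rewrite -zVV' addrC addKr.
have -> : rz * m%:Z = dz * p%:Z - zV * p%:Z by rewrite -t_deg0 addrK.
ring.
Qed.

Lemma Bf_in_Af_tvar y : Bf y -> in_Af_tvar y.
Proof.
move=> [n [b [b_n ->]]]; have [L [P [P_deg fLb]]] := slice_expansion b_n.
have -> : toF b / toF f ^+ n = \sum_(k < size P) toF (P`_k * r ^+ k) / toF f ^+ (n + L).
  rewrite -mulr_suml -rmorph_sum -horner_coef -fLb rmorphM rmorphXn exprD.
  by rewrite [toF f ^+ n * _]mulrC invfM mulrA [_ * toF b]mulrC mulfK.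
apply: in_Af_tvar_sum => k _; have [->|Pk_neq0] := eqVneq P`_k 0.
  rewrite mul0r rmorph0 mul0r -(mul0r (tvar ^+ 0)); apply: in_Af_tvar_monomial.
  exact (deg0_frac0 _ _ ker_hom_subring).
have Pk_ker : ker_hom (dz * (n + L)%:Z - rz * k%:Z) P`_k.
  by apply: ker_hom_cast (P_deg k); rewrite PoszD; ring.
have /dvdnP [l k_eq] := m_dvd Pk_neq0 Pk_ker.
have -> : toF (P`_k * r ^+ k) / toF f ^+ (n + L) =
    toF (P`_k * V' ^+ (p * l)) / toF f ^+ (n + L + p * l) * tvar ^+ l.
  rewrite /tvar expr_div_n -exprM -[toF _ ^+ l]rmorphXn exprMn -!exprM !rmorphM.
  rewrite [toF f ^+ (_ + p * l)]exprD [in r ^+ k]k_eq (mulnC l m).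
  apply: divf_split_square; rewrite ?toF_fX_neq0 //.
  by rewrite -rmorphM -exprMn VV' -exprM rmorphXn -exprD mul2n addnn.
apply: in_Af_tvar_monomial; exists (n + L + p * l)%N, (P`_k * V' ^+ (p * l)); split=> //.
apply: ker_hom_cast (ker_homM Pk_ker (ker_homX (p * l) V'_ker)).
by rewrite k_eq !PoszD !PoszM [zV' * _]mulrA zV'_p; ring.
Qed.

Lemma in_Af_tvar_Bf y : in_Af_tvar y -> Bf y.
Proof.
move=> [P [P_A ->]]; rewrite horner_coef.
apply: (deg0_frac_sum Bd_subring f_Bd Dr_neq0) => k _.
apply: (deg0_fracM Bd_subring); first exact: Af_Bf.
exact (deg0_fracX Bd_subring k Bf_tvar).
Qed.

Let V_neq0 : V != 0.
Proof.
apply/eqP => V0; move: VV'; rewrite V0 mul0r => /esym/eqP.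
by rewrite expf_eq0 (negbTE Dr_neq0) andbF.
Qed.

Lemma tvarX_mul_fX k s : (k <= s)%N ->
  tvar ^+ k * toF f ^+ (p * s) = toF (V ^+ (p * k) * f ^+ (p * (s - k)) * r ^+ (m * k)).
Proof.
move=> k_s; have ps : (p * s = p * k + p * (s - k))%N by rewrite -mulnDr subnKC.
rewrite /tvar expr_div_n -exprM -[toF _ ^+ k]rmorphXn exprMn -!exprM ps exprD mulrA.
by rewrite divfK ?toF_fX_neq0 // [in RHS]mulrC mulrA !rmorphM !rmorphXn.
Qed.

Lemma Af_tvar_root_eq0 (P : {poly F}) : (forall k, Af P`_k) -> P.[tvar] = 0 -> P = 0.
Proof.
move=> P_A Pt0; pose s := size P.
have [L [c [c_ker c_eq]]] := deg0_frac_common_den ker_hom_subring ker_hom_slice Dr_neq0 P_A.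
pose a k := c k * (V ^+ (p * k) * f ^+ (p * (s - k))).
pose Q := \sum_(k < s) a k *: 'X^(m * k).
have Q_deg : slice_poly (dz * (L + p * s)%:Z) Q.
  move=> j; rewrite /Q coef_sum; apply: ker_hom_sum => -[k k_s] _ /=.
  rewrite coefZ coefXn; case: eqP => [->|_]; last by rewrite mulr0; apply: (ker_hom0 _).
  rewrite mulr1; apply: ker_hom_cast (ker_homM (c_ker k)
    (ker_homM (ker_homX (p * k) V_ker) (ker_homX (p * (s - k)) ker_hom_slice))).
  have zVp : zV * p%:Z = dz * p%:Z - rz * m%:Z by rewrite -t_deg0 addrC addKr.
  rewrite -(subnKC (ltnW k_s)) addKn !PoszD !PoszM [zV * _]mulrA zVp; ring.
have Qr0 : Q.[r] = 0.
  apply/eqP; rewrite -tofrac_eq0 -(mul0r (toF f ^+ L * toF f ^+ (p * s))) -Pt0.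
  rewrite horner_sum rmorph_sum horner_coef mulr_suml; apply/eqP/eq_bigr => -[k k_s] _ /=.
  rewrite mulrACA c_eq tvarX_mul_fX 1?ltnW // hornerZ hornerXn -!rmorphM.
  by rewrite /a !mulrA.
have a0 k : (k < s)%N -> a k = 0.
  by move=> k_s; rewrite -(coef_sum_scaleXn a m_gt0 k_s) -/Q (slice_poly_root_eq0 Q_deg Qr0) coef0.
apply/polyP => k; rewrite coef0; have [k_s|k_ge] := ltnP k s; last by rewrite nth_default.
move/eqP: (a0 k k_s); rewrite !mulf_eq0 !expf_eq0 (negbTE V_neq0) (negbTE Dr_neq0) !andbF !orbF.
move/eqP => ck0; move/eqP: (c_eq k); rewrite ck0 rmorph0 mulf_eq0 (negbTE (toF_fX_neq0 L)) orbF.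
by move/eqP.
Qed.

Hypothesis dz_neq0 : dz != 0.

Lemma cylindrical_slice : cylindrical Bi f.
Proof.
split=> //; exists (d *~ dz); split=> //.
- move=> n n_gt0; rewrite pmulrn -mulrzA -(mulr0z d); apply/eqP.
  move/(mulrz_inj_infinite_order d_inf)/eqP; rewrite mulf_eq0 (negbTE dz_neq0) /=.
  by case: n n_gt0.
- exists Af, tvar; split.
  + split=> [a /Af_Bf/deg0_locE //|]; split; first exact (deg0_frac0 _ _ ker_hom_subring).
    exact (deg0_frac1 _ _ ker_hom_subring).
  + move=> a b; exact: (deg0_fracB ker_hom_subring ker_hom_slice Dr_neq0).
  + split=> [a b|]; last exact/deg0_locE/Bf_tvar.
    exact: (deg0_fracM ker_hom_subring).
  + by move=> y; rewrite deg0_locE; split=> [/Bf_in_Af_tvar|/in_Af_tvar_Bf].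
  + exact: Af_tvar_root_eq0.
Qed.

End Cylinder.

End Slice.

Lemma slice_period rz r (g : nat) : r \in Bd rz -> D r != 0 -> D (D r) = 0 -> (0 < g)%N ->
  (forall n, in_ker_degree_group n -> (g%:Z %| n)%Z) ->
  exists m : nat, [/\ (0 < m)%N, (g%:Z %| rz * m%:Z)%Z &
    forall k L c, c != 0 -> ker_hom ((rz + ez) * L%:Z - rz * k%:Z) c -> (m %| k)%N].
Proof.
move=> r_rz Dr_neq0 DDr0 g_gt0 g_dvd; exists (g %/ gcdn g `|rz|)%N.
split; first by rewrite divn_gt0 ?gcdn_gt0 ?g_gt0 // dvdn_leq ?dvdn_gcdl.
  by rewrite dvdz_mul_divgcd.
move=> k L c c_neq0 c_ker; rewrite -dvdz_mul_divgcd //.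
have g_dz : (g%:Z %| (rz + ez) * L%:Z)%Z.
  by apply/dvdz_mulr/g_dvd/(ker_degree_group_hom Dr_neq0 (ker_hom_slice r_rz DDr0)).
rewrite -[_ * k%:Z](subKr ((rz + ez) * L%:Z)) rpredB //.
exact/g_dvd/(ker_degree_group_hom c_neq0 c_ker).
Qed.

Lemma exists_cylindrical_der_ker rz0 r0 zh h (g : nat) :
  r0 \in Bd rz0 -> D r0 != 0 -> D (D r0) = 0 -> zh != 0 -> h != 0 -> ker_hom zh h ->
  (0 < g)%N -> in_ker_degree_group g%:Z ->
  (forall n, in_ker_degree_group n -> (g%:Z %| n)%Z) ->
  exists f, [/\ (exists x, Veronese Bi d x /\ f = D x), D f = 0 & cylindrical Bi f].
Proof.
move=> r0_rz0 Dr0_neq0 DDr0 zh_neq0 h_neq0 h_ker g_gt0 g_in g_dvd.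
(* The new slice r0 a b c makes f divisible by a and b, and c makes deg f nonzero. *)
have [a [b [za [zb [a_neq0 b_neq0 a_ker b_ker g_eq]]]]] := g_in.
have [zc [c [c_neq0 c_ker dz_neq0]]] :
    exists zc c, [/\ c != 0, ker_hom zc c & rz0 + (za + zb + zc) + ez != 0].
  have [dz0|dz_neq0] := eqVneq (rz0 + (za + zb) + ez) 0; last first.
    by exists 0, 1; rewrite oner_neq0 addr0; split=> //; apply: ker_hom1.
  exists zh, h; split=> //.
  have -> : rz0 + (za + zb + zh) + ez = zh + (rz0 + (za + zb) + ez) by ring.
  by rewrite dz0 addr0.
have K_ker := ker_homM (ker_homM a_ker b_ker) c_ker.
have K_neq0 : a * b * c != 0 by rewrite !mulf_neq0.
have [r_rz Dr_eq Dr_neq0 DDr_0] := slice_mulr_ker r0_rz0 Dr0_neq0 DDr0 K_neq0 K_ker.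
have [m [m_gt0 /dvdzP [w rzm_eq] m_dvd]] := slice_period r_rz Dr_neq0 DDr_0 g_gt0 g_dvd.
have e_ker := ker_homM (ker_hom_slice r0_rz0 DDr0) c_ker.
have [p [V [V' [zV [zV' [V_ker V'_ker VV' t_deg0 zVV']]]]]] :=
  ker_hom_square_split w a_ker b_ker e_ker.
exists (D (r0 * (a * b * c))); split=> //.
  by exists (r0 * (a * b * c)); split=> //; apply: Bd_Veronese r_rz.
apply: (cylindrical_slice (p := p) r_rz Dr_neq0 DDr_0 m_gt0 m_dvd V_ker V'_ker) => //.
- by rewrite VV' Dr_eq; congr (_ ^+ 2); ring.
- by rewrite rzm_eq g_eq t_deg0; congr (_ * _); ring.
- by rewrite zVV'; congr (_ + _); ring.
Qed.

End IntShift.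
End Veronese.

Theorem corollary4p5 (G : zmodType) (B : idomainType) (Bi : G -> pred B)
  (d : G) (D : B -> B) :
  is_grading Bi -> contains_Q B -> infinite_order d ->
  derivation_on (Veronese Bi d) D ->
  homogeneous_der Bi d D ->
  locally_nilpotent_on (Veronese Bi d) D ->
  (exists x, Veronese Bi d x /\ D x != 0) ->
  (exists x, [/\ Veronese Bi d x, D x = 0 & x \notin Bi 0]) ->
  exists f : B,
    [/\ (exists g, Veronese Bi d g /\ f = D g), D f = 0 & cylindrical Bi f].
Proof.
move=> grB QB d_inf derD homD nilD [x [x_V Dx_neq0]] [y [y_V Dy0 y_not0]].
have [z0 [x0 [x0_z0 Dx0_neq0]]] := Veronese_hom_der_neq0 grB derD x_V Dx_neq0.
have [ez shiftD] := homogeneous_der_int_shift grB QB derD homD x0_z0 Dx0_neq0.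
have [rz0 [r0 [r0_rz0 Dr0_neq0 DDr0]]] := exists_local_slice grB derD nilD shiftD x0_z0 Dx0_neq0.
have [zh [h [zh_neq0 h_neq0 h_ker]]] :=
  Veronese_ker_nonzero_degree grB QB derD homD y_V Dy0 y_not0.
have [g [g_gt0 g_in g_dvd]] :=
  ker_degree_group_generator grB derD zh_neq0 (ker_degree_group_hom grB derD h_neq0 h_ker).
exact (exists_cylindrical_der_ker grB QB derD nilD shiftD d_inf r0_rz0 Dr0_neq0 DDr0
  zh_neq0 h_neq0 h_ker g_gt0 g_in g_dvd).
Qed.
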